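(* Let $\mathcal{L}$ be a finite-dimensional complex filiform Lie algebra with $\dim\mathcal{L}\ge 3$. Then $\mathcal{L}$ admits a local automorphism which is not an automorphism.
   Context: For a Lie algebra $\mathcal{L}$ set $\mathcal{L}^0=\mathcal{L}$, $\mathcal{L}^k=[\mathcal{L}^{k-1},\mathcal{L}]$. $\mathcal{L}$ is nilpotent if $\mathcal{L}^k=\{0\}$ for some $k$; a nilpotent Lie algebra of dimension $n$ is filiform if $\dim\mathcal{L}^k=n-k-1$ for $1\le k\le n-1$. An automorphism is an invertible linear map $\Phi$ with $\Phi([x,y])=[\Phi(x),\Phi(y)]$; a linear map $\Delta$ is a local automorphism if for every $x\in\mathcal{L}$ there is an automorphism $\Phi_x$ with $\Phi_x(x)=\Delta(x)$. *)

From HB Require Import structures.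
From mathcomp Require Import all_boot all_order all_algebra.
Set Implicit Arguments. Unset Strict Implicit. Unset Printing Implicit Defensive.
Import GRing.Theory Num.Theory.
Local Open Scope ring_scope.

Definition is_lie_bracket (F : fieldType) (n : nat)
    (br : 'rV[F]_n -> 'rV[F]_n -> 'rV[F]_n) : Prop :=
  [/\ (forall (a : F) x y z, br (a *: x + y) z = a *: br x z + br y z),
      (forall (a : F) x y z, br z (a *: x + y) = a *: br z x + br z y),
      (forall x, br x x = 0) &
      (forall x y z, br x (br y z) + br y (br z x) + br z (br x y) = 0)].

(* [A, L]: the subspace spanned by all brackets [u, v], u in the row space of A,
   v in L (spanned by brackets of generators, by bilinearity). *)
Definition bracket_with_L (F : fieldType) (n : nat)
    (br : 'rV[F]_n -> 'rV[F]_n -> 'rV[F]_n) (A : 'M[F]_n) : 'M[F]_n :=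
  (\sum_(i < n) \sum_(j < n) <<br (row i A) (delta_mx 0 j)>>)%MS.

Definition lcs (F : fieldType) (n : nat)
    (br : 'rV[F]_n -> 'rV[F]_n -> 'rV[F]_n) (k : nat) : 'M[F]_n :=
  iter k (bracket_with_L br) 1%:M.

Definition nilpotent_lie (F : fieldType) (n : nat)
    (br : 'rV[F]_n -> 'rV[F]_n -> 'rV[F]_n) : Prop :=
  exists k, \rank (lcs br k) = 0%N.

Definition filiform (F : fieldType) (n : nat)
    (br : 'rV[F]_n -> 'rV[F]_n -> 'rV[F]_n) : Prop :=
  nilpotent_lie br /\
  forall k : nat, (1 <= k <= n.-1)%N -> \rank (lcs br k) = (n - k - 1)%N.

(* Linear maps are matrices acting on the right: x |-> x *m P. *)
Definition lie_automorphism (F : fieldType) (n : nat)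
    (br : 'rV[F]_n -> 'rV[F]_n -> 'rV[F]_n) (P : 'M[F]_n) : Prop :=
  P \in unitmx /\ forall x y, br x y *m P = br (x *m P) (y *m P).

Definition local_automorphism (F : fieldType) (n : nat)
    (br : 'rV[F]_n -> 'rV[F]_n -> 'rV[F]_n) (D : 'M[F]_n) : Prop :=
  forall x : 'rV[F]_n, exists P : 'M[F]_n, lie_automorphism br P /\ x *m P = x *m D.

From HB Require Import structures.
From mathcomp Require Import all_boot all_order all_algebra zify.
Set Implicit Arguments. Unset Strict Implicit. Unset Printing Implicit Defensive.
Import GRing.Theory Num.Theory.
Local Open Scope ring_scope.

(* Write V = L^1 and let z span the central ideal L^(n-2).  Pick e0 outside V
   and w in L^(n-3) with z = [e0, w] <> 0, complete V + <e0> by e1, and take a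
   form mu vanishing on L^2 with mu([e0, e1]) = 1.  The map D x = x + mu(x) z
   is not an automorphism, since D[e0, e1] - [D e0, D e1] = z.  It is a local
   automorphism: at x outside V it agrees with the transvection
   y |-> y + f(y) mu(x) z (f a form killing V with f(x) = 1), and on V with
   Phi x = x + lam(x) w + mu(x) z, where lam kills V + <e0> and lam(e1) = 1.
   Phi preserves brackets thanks to the identity
   mu([x, y]) z = lam(x) [w, y] + lam(y) [x, w], an alternating bilinear
   identity that only has to be checked on V, e0 and e1. *)

Section RowSpaces.
Variables (F : fieldType) (n : nat).
Implicit Types (S : 'M[F]_n) (x y : 'rV[F]_n).

Lemma mul_rV_lin1_linear m (f : 'rV[F]_n -> 'rV[F]_m) :
  linear f -> forall x, x *m lin1_mx f = f x.
Proof.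
move=> f_lin x.
pose g : {linear 'rV[F]_n -> 'rV[F]_m} :=
  HB.pack f (GRing.isLinear.Build _ _ _ _ f f_lin).
exact: (mul_rV_lin1 g).
Qed.

Lemma sub_kermx_lin1P m p (f : 'rV[F]_n -> 'rV[F]_m) (A : 'M[F]_(p, n)) :
  linear f -> reflect (forall i, f (row i A) = 0) (A <= kermx (lin1_mx f))%MS.
Proof.
move=> f_lin; apply: (iffP row_subP) => f0 i.
  by rewrite -mul_rV_lin1_linear //; apply/sub_kermxP.
by apply/sub_kermxP; rewrite mul_rV_lin1_linear.
Qed.

Lemma linear_eq0_full m (f : 'rV[F]_n -> 'rV[F]_m) S :
  linear f -> row_full S -> (S <= kermx (lin1_mx f))%MS -> forall x, f x = 0.
Proof.
move=> f_lin S_full Sf x; rewrite -mul_rV_lin1_linear //; apply/sub_kermxP.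
exact: submx_trans (submx_full _ S_full) Sf.
Qed.

Lemma mxrank_adds_notin S x : ~~ (x <= S)%MS -> (\rank S < \rank (S + x))%N.
Proof.
move=> xS; apply: rank_ltmx; rewrite ltmxE addsmxSl /=.
by rewrite addsmx_sub submx_refl.
Qed.

Lemma exists_delta_notin S :
  (\rank S < n)%N -> exists j, ~~ ((delta_mx 0 j : 'rV[F]_n) <= S)%MS.
Proof.
move=> rkS; apply/existsP; apply: contraLR rkS => /existsPn S_full.
rewrite -leqNgt -{1}(mxrank1 F n) mxrankS //.
by apply/row_subP=> j; rewrite row1; apply/negPn/S_full.
Qed.

Definition lform (c : 'cV[F]_n) x : F := (x *m c) 0 0.

Lemma lform_is_linear c : scalar (lform c).
Proof. by move=> a x y; rewrite /lform mulmxDl -scalemxAl !mxE. Qed.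

HB.instance Definition _ c :=
  GRing.isLinear.Build F 'rV[F]_n F *%R (lform c) (lform_is_linear c).

Lemma mul_rank1 x (c : 'cV[F]_n) y : x *m (c *m y) = lform c x *: y.
Proof. by rewrite mulmxA [x *m c]mx11_scalar mul_scalar_mx. Qed.

Lemma unitmx_ker0 (P : 'M[F]_n) :
  (forall x, x *m P = 0 -> x = 0) -> P \in unitmx.
Proof.
move=> P_inj; rewrite -row_free_unit -kermx_eq0; apply/eqP/row_matrixP=> i.
by rewrite row0; apply: P_inj; rewrite -row_mul mulmx_ker row0.
Qed.

Lemma mulmx_add_rank1 x (c : 'cV[F]_n) y : x *m (1%:M + c *m y) = x + lform c x *: y.
Proof. by rewrite mulmxDr mulmx1 mul_rank1. Qed.

Lemma exists_lform_notin S x : ~~ (x <= S)%MS ->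
  exists c, (forall y, (y <= S)%MS -> lform c y = 0) /\ lform c x = 1.
Proof.
rewrite submxE; set K := cokermx S => xS.
have [j xj] : exists j, (x *m K) 0 j != 0.
  apply/existsP; apply: contraNT xS => /existsPn x0.
  by apply/eqP/rowP=> k; rewrite [RHS]mxE; apply/eqP/negbNE/x0.
have lformK y : lform (col j K) y = (y *m K) 0 j.
  by rewrite /lform colE mulmxA -colE mxE.
exists (((x *m K) 0 j)^-1 *: col j K); split=> [y|].
  rewrite submxE -/K => /eqP yK.
  by rewrite /lform -scalemxAr mxE -/(lform _ y) lformK yK [X in _ * X]mxE mulr0.
by rewrite /lform -scalemxAr mxE -/(lform _ x) lformK mulVf.
Qed.

End RowSpaces.

Section AlternatingForms.
Variables (F : fieldType) (n m : nat) (G : 'rV[F]_n -> 'rV[F]_n -> 'rV[F]_m).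
Hypotheses (G_linear : forall x, linear (G x))
  (G_anti : forall x y, G y x = - G x y) (G_alt : forall x, G x x = 0).

Lemma alternating_eq0 (V : 'M[F]_n) (e0 e1 : 'rV[F]_n) :
  row_full (V + e0 + e1)%MS -> (forall v y, (v <= V)%MS -> G v y = 0) ->
  G e0 e1 = 0 -> forall x y, G x y = 0.
Proof.
move=> V_full GV G01.
have GVr x v : (v <= V)%MS -> G x v = 0 by move=> vV; rewrite G_anti GV ?oppr0.
have G_eq0 x : G x e0 = 0 -> G x e1 = 0 -> forall y, G x y = 0.
  move=> Gx0 Gx1; apply: (linear_eq0_full (G_linear x) V_full).
  rewrite !addsmx_sub -andbA; apply/and3P; split; apply/sub_kermx_lin1P => // i.
  - by rewrite GVr ?row_sub.
  - by rewrite row_id.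
  - by rewrite row_id.
have G0 := G_eq0 e0 (G_alt e0) G01.
have G10 : G e1 e0 = 0 by rewrite G_anti G01 oppr0.
have G1 := G_eq0 e1 G10 (G_alt e1).
move=> x y; apply: G_eq0 => //; first by rewrite G_anti G0 oppr0.
by rewrite G_anti G1 oppr0.
Qed.
End AlternatingForms.

Section LieAlgebra.
Variables (F : fieldType) (n : nat) (br : 'rV[F]_n -> 'rV[F]_n -> 'rV[F]_n).
Hypothesis br_lie : is_lie_bracket br.
Implicit Types (x y z w : 'rV[F]_n) (A B : 'M[F]_n).

Lemma br_linear x : linear (br x).
Proof. by case: br_lie => _ brD _ _ a y z; apply: brD. Qed.

HB.instance Definition _ x := GRing.isLinear.Build F _ _ _ (br x) (br_linear x).

Lemma br_alt x : br x x = 0.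
Proof. by case: br_lie. Qed.

Lemma br_anti x y : br y x = - br x y.
Proof.
have brDl z : br (x + y) z = br x z + br y z.
  by have [brD _ _ _] := br_lie; have := brD 1 x y z; rewrite !scale1r.
apply/eqP; rewrite -addr_eq0; have := br_alt (x + y).
by rewrite brDl !linearD /= !br_alt add0r addr0 addrC => ->.
Qed.

Lemma brDl x y z : br (x + y) z = br x z + br y z.
Proof. by rewrite !(br_anti z) linearD opprD. Qed.

Lemma brZl a x z : br (a *: x) z = a *: br x z.
Proof. by rewrite !(br_anti z) linearZ scalerN. Qed.

Definition central z := forall y, br z y = 0.

Lemma central_r z y : central z -> br y z = 0.
Proof. by move=> zC; rewrite br_anti zC oppr0. Qed.

Lemma br_shift_central z a b x y :
  central z -> br (x + a *: z) (y + b *: z) = br x y.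
Proof.
move=> zC; rewrite brDl brZl zC scaler0 addr0.
by rewrite linearD linearZ /= (central_r _ zC) scaler0 addr0.
Qed.

Lemma bracket_with_L_sub A B :
  (forall i j, br (row i A) (delta_mx 0 j) <= B)%MS -> (bracket_with_L br A <= B)%MS.
Proof.
move=> AB; apply/sumsmx_subP=> i _; apply/sumsmx_subP=> j _.
by rewrite genmxE.
Qed.

Lemma br_sub_bracket_with_L A x y :
  (x <= A)%MS -> (br x y <= bracket_with_L br A)%MS.
Proof.
have row_br i : (br (row i A) y <= bracket_with_L br A)%MS.
  rewrite -(mul_rV_lin1_linear (br_linear (row i A))).
  apply: submx_trans (submxMl _ _) _.
  apply/row_subP=> j; rewrite rowE mul_rV_lin1_linear; last exact: br_linear.
  by apply: (sumsmx_sup i) => //; apply: (sumsmx_sup j) => //; rewrite genmxE.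
case/submxP=> D ->; rewrite br_anti eqmx_opp.
rewrite -(mul_rV_lin1_linear (br_linear y)) -mulmxA.
apply: submx_trans (submxMl _ _) _; apply/row_subP=> i.
rewrite row_mul mul_rV_lin1_linear; last exact: br_linear.
by rewrite br_anti eqmx_opp.
Qed.

Lemma br_sub_bracket_with_Lr A x y :
  (y <= A)%MS -> (br x y <= bracket_with_L br A)%MS.
Proof. by move=> yA; rewrite br_anti eqmx_opp br_sub_bracket_with_L. Qed.

Lemma lcsS k : lcs br k.+1 = bracket_with_L br (lcs br k).
Proof. by []. Qed.

Lemma br_sub_derived x y : (br x y <= lcs br 1)%MS.
Proof. exact/br_sub_bracket_with_L/submx1. Qed.

Lemma br_derived_eq0 w :
  (forall y, central (br w y)) -> forall v, (v <= lcs br 1)%MS -> br w v = 0.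
Proof.
move=> wC v vL1; rewrite -(mul_rV_lin1_linear (br_linear w)); apply/sub_kermxP.
apply: submx_trans vL1 _; rewrite lcsS; apply: bracket_with_L_sub => i j.
apply/sub_kermx_lin1P; first exact: br_linear.
move=> k; rewrite row_id; have [_ _ _ jacobi] := br_lie.
have := jacobi w (row i (lcs br 0)) (delta_mx 0 j).
by rewrite (br_anti w (delta_mx 0 j)) linearN /= !(central_r _ (wC _)) oppr0 !addr0.
Qed.

Lemma shear_automorphism (c : 'cV[F]_n) z :
  central z -> (z <= lcs br 1)%MS ->
  (forall v, (v <= lcs br 1)%MS -> lform c v = 0) ->
  lie_automorphism br (1%:M + c *m z).
Proof.
move=> zC zL1 cL1; split=> [|x y]; last first.
  by rewrite !mulmx_add_rank1 br_shift_central // cL1 ?br_sub_derived // scale0r addr0.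
apply: unitmx_ker0 => x; rewrite mulmx_add_rank1 => x0.
have := congr1 (lform c) x0.
rewrite linearD linearZ /= (cL1 z zL1) mulr0 addr0 linear0 => cx0.
by move: x0; rewrite cx0 scale0r addr0.
Qed.

Lemma shear_not_automorphism (c : 'cV[F]_n) z x y :
  central z -> z != 0 -> lform c (br x y) != 0 -> ~ lie_automorphism br (1%:M + c *m z).
Proof.
move=> zC z_neq0 cxy [_ /(_ x y)]; rewrite !mulmx_add_rank1 br_shift_central //.
move/eqP; rewrite -subr_eq0 addrAC subrr add0r scaler_eq0.
by rewrite (negPf cxy) (negPf z_neq0).
Qed.

Lemma frame_br_notin_lcs2 e0 e1 :
  (\rank (lcs br 2) < \rank (lcs br 1))%N -> row_full (lcs br 1 + e0 + e1)%MS ->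
  ~~ (br e0 e1 <= lcs br 2)%MS.
Proof.
move=> rk_lt L_full; apply: contraTN rk_lt => e01_L2; rewrite -leqNgt mxrankS //.
pose G x y := br x y *m cokermx (lcs br 2).
have G0 : forall x y, G x y = 0.
  apply: (alternating_eq0 _ _ _ L_full).
  - by move=> x a y y'; rewrite /G linearP mulmxDl scalemxAl.
  - by move=> x y; rewrite /G br_anti mulNmx.
  - by move=> x; rewrite /G br_alt mul0mx.
  - by move=> v y vL1; apply/eqP; rewrite -submxE lcsS br_sub_bracket_with_L.
  - by apply/eqP; rewrite -submxE.
by rewrite lcsS; apply: bracket_with_L_sub => i j; rewrite submxE -/(G _ _) G0.
Qed.

Lemma frame_cocycle e0 e1 w (cl cm : 'cV[F]_n) :
  row_full (lcs br 1 + e0 + e1)%MS ->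
  (forall v, (v <= lcs br 1)%MS -> br v w = 0) ->
  (forall v, (v <= lcs br 1 + e0)%MS -> lform cl v = 0) -> lform cl e1 = 1 ->
  (forall v, (v <= lcs br 2)%MS -> lform cm v = 0) -> lform cm (br e0 e1) = 1 ->
  forall x y, lform cm (br x y) *: br e0 w = lform cl x *: br w y + lform cl y *: br x w.
Proof.
move=> L_full wL1 cl_V0 cl_e1 cm_L2 cm_e01.
pose M x := lin1_mx (br x) *m (cm *m br e0 w) - (lform cl x *: lin1_mx (br w) + cl *m br x w).
have ME x y : y *m M x =
    lform cm (br x y) *: br e0 w - (lform cl x *: br w y + lform cl y *: br x w).
  rewrite mulmxBr mulmxDr (mulmxA y) -scalemxAr !mul_rank1.
  by rewrite !mul_rV_lin1_linear //; exact: br_linear.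
move=> x y; apply/eqP; rewrite -subr_eq0 -ME; apply/eqP; move: x y.
apply: (alternating_eq0 _ _ _ L_full) => [x a y y'|x y|x|v y vL1|].
- by rewrite mulmxDl scalemxAl.
- rewrite !ME (br_anti x y) (br_anti x w) (br_anti w y) linearN /= scaleNr !scalerN.
  by rewrite opprD !opprK opprB addrC [_ *: br x w + _]addrC.
- by rewrite ME br_alt linear0 scale0r sub0r (br_anti w x) scalerN subrr oppr0.
- rewrite ME (cm_L2 (br v y)) ?br_sub_bracket_with_L //.
  rewrite (cl_V0 v) ?(submx_trans vL1 (addsmxSl _ _)) //.
  by rewrite !scale0r wL1 // scaler0 addr0 subrr.
- by rewrite ME cm_e01 cl_e1 cl_V0 ?addsmxSr // scale0r add0r scale1r subrr.
Qed.

Section Cocycle.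
Variables (z w : 'rV[F]_n) (cl cm : 'cV[F]_n).
Local Notation lam := (lform cl).
Local Notation mu := (lform cm).
Hypotheses (z_central : central z) (z_derived : (z <= lcs br 1)%MS)
  (lam_derived : forall v, (v <= lcs br 1)%MS -> lam v = 0)
  (lam_w : lam w != -1) (mu_z : mu z != -1)
  (cocycle : forall x y, mu (br x y) *: z = lam x *: br w y + lam y *: br x w).

Lemma cocycle_automorphism : lie_automorphism br (1%:M + cl *m w + cm *m z).
Proof.
have Phi_E x : x *m (1%:M + cl *m w + cm *m z) = x + lam x *: w + mu x *: z.
  by rewrite !mulmxDr mulmx1 !mul_rank1.
split=> [|x y]; last first.
  rewrite !Phi_E br_shift_central // lam_derived ?br_sub_derived // scale0r addr0.
  rewrite cocycle brDl brZl !linearD !linearZ /= br_alt !(@scaler0 F 'rV[F]_n) addr0.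
  by rewrite -addrA [_ + lam x *: _]addrC.
have lam1_neq0 : 1 + lam w != 0 by rewrite addrC addr_eq0.
have mu1_neq0 : 1 + mu z != 0 by rewrite addrC addr_eq0.
apply: unitmx_ker0 => x; rewrite Phi_E => x0.
have lam_x : lam x = 0.
  have := congr1 lam x0; rewrite !linearD !linearZ /= (lam_derived z_derived).
  rewrite mulr0 addr0 linear0 -{1}[lam x]mulr1 -mulrDr => /eqP.
  by rewrite mulf_eq0 (negPf lam1_neq0) orbF => /eqP.
move: x0; rewrite lam_x scale0r addr0 => x0.
have mu_x : mu x = 0.
  have := congr1 mu x0; rewrite linearD linearZ /= linear0.
  rewrite -{1}[mu x]mulr1 -mulrDr => /eqP.
  by rewrite mulf_eq0 (negPf mu1_neq0) orbF => /eqP.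
by move: x0; rewrite mu_x scale0r addr0.
Qed.

Lemma cocycle_local_automorphism : local_automorphism br (1%:M + cm *m z).
Proof.
move=> x; have [xL1 | xL1] := boolP (x <= lcs br 1)%MS.
  exists (1%:M + cl *m w + cm *m z); split; first exact: cocycle_automorphism.
  by rewrite !mulmxDr mulmx1 !mul_rank1 lam_derived // scale0r addr0.
have [c [cL1 cx]] := exists_lform_notin xL1.
exists (1%:M + c *m (mu x *: z)); split.
  apply: shear_automorphism => //; last by rewrite scalemx_sub.
  by move=> y; rewrite brZl z_central scaler0.
by rewrite !mulmx_add_rank1 cx scale1r.
Qed.

End Cocycle.

End LieAlgebra.

Section Filiform.
Variables (F : fieldType) (n : nat) (br : 'rV[F]_n -> 'rV[F]_n -> 'rV[F]_n).
Hypotheses (br_lie : is_lie_bracket br) (n_ge3 : (3 <= n)%N)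
  (rank_lcs : forall k, (1 <= k <= n.-1)%N -> \rank (lcs br k) = (n - k - 1)%N).

HB.instance Definition _ x := GRing.isLinear.Build F _ _ _ (br x) (br_linear br_lie x).

Lemma lcs_last_central z : (z <= lcs br (n - 2))%MS -> central br z.
Proof.
move=> zL y; have lcs_last0 : lcs br n.-1 = 0.
  by apply/eqP; rewrite -mxrank_eq0 rank_lcs; lia.
have : (br z y <= lcs br n.-1)%MS.
  have -> : n.-1 = (n - 2).+1 by lia.
  exact: br_sub_bracket_with_L.
by rewrite lcs_last0 => /submx0null.
Qed.

Lemma lcs_prelast_br_central w y :
  (w <= lcs br (n - 3))%MS -> central br (br w y) /\ central br (br y w).
Proof.
have n2E : (n - 2 = (n - 3).+1)%N by lia.
by move=> wL; split; apply: lcs_last_central; rewrite n2E;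
  [apply: br_sub_bracket_with_L | apply: br_sub_bracket_with_Lr].
Qed.

Lemma lcs_prelast_centralizes w :
  (w <= lcs br (n - 3))%MS -> forall v, (v <= lcs br 1)%MS -> br v w = 0.
Proof.
move=> wL v vL1; have wC y := (lcs_prelast_br_central y wL).1.
by rewrite br_anti // (br_derived_eq0 br_lie wC vL1); exact: oppr0.
Qed.

Lemma exists_prelast_noncentral :
  exists w0 j, (w0 <= lcs br (n - 3))%MS /\ br (delta_mx 0 j) w0 != 0.
Proof.
have : [exists i, exists j, br (row i (lcs br (n - 3))) (delta_mx 0 j) != 0].
  apply: contraT => /existsPn all0.
  have : (lcs br (n - 2) <= (0 : 'M_n))%MS.
    have -> : (n - 2 = (n - 3).+1)%N by lia.
    apply: bracket_with_L_sub => i j.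
    by move/existsPn: (all0 i) => /(_ j) /negbNE /eqP ->; exact: sub0mx.
  by move/mxrankS; rewrite mxrank0 rank_lcs; lia.
case/existsP=> i /existsP[j nz]; exists (row i (lcs br (n - 3))), j.
by rewrite row_sub br_anti // oppr_eq0.
Qed.

Lemma filiform_frame : exists w0 e0 e1,
  [/\ (w0 <= lcs br (n - 3))%MS, br e0 w0 != 0, ~~ (e1 <= lcs br 1 + e0)%MS,
      row_full (lcs br 1 + e0 + e1)%MS & ~~ (br e0 e1 <= lcs br 2)%MS].
Proof.
have [w0 [j [w0W e0w0]]] := exists_prelast_noncentral.
set e0 : 'rV_n := delta_mx 0 j in e0w0 *.
have e0L1 : ~~ (e0 <= lcs br 1)%MS.
  by apply: contra e0w0 => e0L1; rewrite (lcs_prelast_centralizes w0W e0L1).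
have rk_L1 : \rank (lcs br 1) = (n - 2)%N by rewrite rank_lcs; lia.
have rk_L1e0 : \rank (lcs br 1 + e0)%MS = n.-1.
  apply/eqP; rewrite eqn_leq; apply/andP; split.
    have [le_rk _] := mxrank_adds_leqif (lcs br 1) e0.
    by apply: leq_trans le_rk _; rewrite rk_L1; have := rank_leq_row e0; lia.
  by have := mxrank_adds_notin e0L1; rewrite rk_L1; lia.
have [j1 e1_notin] := exists_delta_notin (S := (lcs br 1 + e0)%MS) (ltac:(lia)).
set e1 : 'rV_n := delta_mx 0 j1 in e1_notin.
have L_full : row_full (lcs br 1 + e0 + e1)%MS.
  rewrite /row_full eqn_leq rank_leq_col.
  by have := mxrank_adds_notin e1_notin; rewrite rk_L1e0; lia.
exists w0, e0, e1; split => //; apply: frame_br_notin_lcs2 => //.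
by rewrite !rank_lcs; lia.
Qed.

Lemma filiform_local_not_automorphism :
  (2%:R : F) != 0 -> exists D, local_automorphism br D /\ ~ lie_automorphism br D.
Proof.
move=> two_neq0.
have [w0 [e0 [e1 [w0W e0w0 e1_notin L_full e01_L2]]]] := filiform_frame.
have [cl [cl_V0 cl_e1]] := exists_lform_notin e1_notin.
have [cm [cm_L2 cm_e01]] := exists_lform_notin e01_L2.
have [w [wW e0w lw]] :
    exists w, [/\ (w <= lcs br (n - 3))%MS, br e0 w != 0 & lform cl w != -1].
  (* Phi is invertible only if lam(w) <> -1; doubling w repairs this. *)
  have [lw0 | lw0] := eqVneq (lform cl w0) (-1); last by exists w0.
  exists (2%:R *: w0); split; first by rewrite scalemx_sub.
    by rewrite linearZ /= scaler_eq0 negb_or two_neq0.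
  by rewrite linearZ /= lw0 mulrN1 eqr_opp mulr2n -subr_eq0 addrK oner_eq0.
have cocycle := frame_cocycle br_lie L_full (lcs_prelast_centralizes wW)
  cl_V0 cl_e1 cm_L2 cm_e01.
set z := br e0 w in e0w cocycle.
have z_central : central br z := (lcs_prelast_br_central e0 wW).2.
have cm_z : lform cm z = lform cl w.
  have := cocycle e0 w; rewrite (cl_V0 e0) ?addsmxSr // scale0r add0r => /eqP.
  by rewrite -subr_eq0 -scalerBl scaler_eq0 (negPf e0w) orbF subr_eq0 => /eqP.
exists (1%:M + cm *m z); split.
  apply: (cocycle_local_automorphism br_lie (w := w) (cl := cl)) => //.
  - exact: br_sub_derived.
  - by move=> v vL1; apply: cl_V0; apply: submx_trans vL1 (addsmxSl _ _).
  - by rewrite cm_z.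
apply: (shear_not_automorphism br_lie (x := e0) (y := e1) z_central e0w).
by rewrite cm_e01 oner_neq0.
Qed.

End Filiform.

Theorem theorem4p1 (C : numClosedFieldType) (n : nat)
    (br : 'rV[C]_n -> 'rV[C]_n -> 'rV[C]_n) :
  (3 <= n)%N -> is_lie_bracket br -> filiform br ->
  exists D : 'M[C]_n, local_automorphism br D /\ ~ lie_automorphism br D.
Proof.
move=> n_ge3 br_lie [_ rank_lcs].
by apply: filiform_local_not_automorphism => //; rewrite pnatr_eq0.
Qed.
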